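(* Let $n\in\mathbb{N}$. Then the complete graph $K_n$ is an $\mathcal{N}$ position for Grim if and only if $n$ is even.
   Context: Grim is a two-player game on a finite simple undirected graph. Any isolated vertices of the starting graph are deleted before play begins. Players alternate moves; a move consists of selecting a vertex of the current graph and deleting it together with all its incident edges, after which every vertex that has become isolated is also deleted. The player who makes the last legal move wins (a player facing the empty graph has no move and loses). A graph is an $\mathcal{N}$ position if the player about to move has a winning strategy, and a $\mathcal{P}$ position otherwise. *)

From mathcomp Require Import all_boot.
Set Implicit Arguments. Unset Strict Implicit. Unset Printing Implicit Defensive.

(* Every graph reachable in Grim is the
   subgraph of the start graph induced on some vertex set S : {set T}
   (deleting vertices and isolated vertices never removes edges between
   surviving vertices). *)

Definition nonisolated (T : finType) (e : rel T) (S : {set T}) : {set T} :=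
  [set x in S | [exists y in S, e x y]].

(* With k >= #|S| this is the
   exact game value, since every move strictly decreases #|S|. *)
Fixpoint grim_win (T : finType) (e : rel T) (k : nat) (S : {set T}) : bool :=
  match k with
  | 0 => false
  | k'.+1 => [exists v in S, ~~ grim_win e k' (nonisolated e (S :\ v))]
  end.

Definition grim_N (T : finType) (e : rel T) : Prop :=
  grim_win e #|T| (nonisolated e [set: T]).

Definition complete_rel (n : nat) : rel 'I_n := fun x y => x != y.

From mathcomp Require Import all_boot.

(* In K_n every move from a set of m >= 2 vertices leaves m - 1 vertices, except
   that a single remaining vertex is isolated and removed.  So the game on K_m
   always lasts exactly m - 1 moves, and the first player makes the last move
   iff m - 1 is odd. *)

Lemma grim_win_set0 (T : finType) (e : rel T) k : grim_win e k set0 = false.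
Proof. by case: k => //= k; apply/existsP => [[v]]; rewrite inE. Qed.

Lemma nonisolated_complete n (S : {set 'I_n}) :
  nonisolated (@complete_rel n) S = if 1 < #|S| then S else set0.
Proof.
apply/setP => x; rewrite /nonisolated inE; case: ifP => [S_gt1 | S_le1].
  case xS: (x \in S) => //=.
  have: 0 < #|S :\ x| by rewrite (cardsD1 x S) xS in S_gt1.
  rewrite card_gt0 => /set0Pn [y]; rewrite !inE => /andP [yx yS].
  by apply/existsP; exists y; rewrite yS /complete_rel eq_sym.
rewrite inE; apply/negbTE/negP => /andP [xS /existsP [y /andP [yS xy]]].
by move/negbT/card_gt1P: S_le1; apply; exists x, y.
Qed.

Lemma grim_win_complete n k (S : {set 'I_n}) :
  1 < #|S| <= k -> grim_win (@complete_rel n) k S = ~~ odd #|S|.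
Proof.
elim: k S => [|k IHk] S /andP [S_gt1 S_le]; first by case: #|S| S_gt1 S_le.
have [v vS] : exists v, v \in S by apply/set0Pn; rewrite -card_gt0 ltnW.
have cardS_delete w : w \in S -> #|S :\ w| = #|S|.-1.
  by move=> wS; rewrite (cardsD1 w S) wS.
have move_value w : w \in S -> grim_win (@complete_rel n) k
    (nonisolated (@complete_rel n) (S :\ w)) = odd #|S|.
  move=> wS; rewrite nonisolated_complete cardS_delete //.
  case: ifP => [S_gt2 | S_le2].
    rewrite IHk cardS_delete ?S_gt2 //=; last by case: #|S| S_le.
    by case: #|S| S_gt1 => // m _; rewrite negbK.
  by rewrite grim_win_set0; case: #|S| S_gt1 S_le2 => [|[|[|m]]].
rewrite /=; apply/existsP/idP => [[w /andP [wS]] | even_S].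
  by rewrite move_value // negbK.
by exists v; rewrite vS move_value.
Qed.

Theorem lemma3p1 (n : nat) (hn : 1 <= n) :
  grim_N (@complete_rel n) <-> ~~ odd n.
Proof.
rewrite /grim_N nonisolated_complete cardsT card_ord.
case: ifP => [n_gt1 | n_le1].
  by rewrite grim_win_complete cardsT card_ord ?n_gt1 ?leqnn; split.
have -> : n = 1 by apply/eqP; rewrite eqn_leq hn andbT leqNgt n_le1.
by rewrite grim_win_set0; split.
Qed.
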